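(* Let $k\ge1$. For all $0\le y_1\le y_2\le\dots\le y_k\le1$ we have $H_k(y_1,\dots,y_k)\ge0$, where \[ H_k(y_1,\dots,y_k):=\sum_{i=1}^{k}(1-y_i)\,y_{i+1}y_{i+2}\cdots y_k\;f_k(y_1)f_k(y_2)\cdots f_k(y_{i-1})\;-\;\prod_{i=1}^k f_k(y_i), \] with empty products equal to $1$.
   Context: For an integer $k\ge1$, $f_k:[0,1]\to[0,1]$ denotes the unique decreasing function satisfying $f_k(x)^k-f_k(x)^{k+1}=x^k-x^{k+1}$ for all $x\in[0,1]$; it is continuous with $f_k(0)=1$, $f_k(1)=0$. *)

From Stdlib Require Import Reals.
Open Scope R_scope.

Fixpoint prodR (g : nat -> R) (n : nat) : R :=
  match n with
  | O => 1
  | S m => prodR g m * g m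
  end.

Fixpoint sumR (g : nat -> R) (n : nat) : R :=
  match n with
  | O => 0
  | S m => sumR g m + g m
  end.

(* f is "the" f_k: decreasing on [0,1], maps [0,1] into [0,1], and
   f(x)^k - f(x)^(k+1) = x^k - x^(k+1) on [0,1]. Such f is unique. *)
Definition is_fk (k : nat) (f : R -> R) : Prop :=
  (forall x, 0 <= x <= 1 -> 0 <= f x <= 1) /\
  (forall x y, 0 <= x <= 1 -> 0 <= y <= 1 -> x < y -> f y < f x) /\
  (forall x, 0 <= x <= 1 -> f x ^ k - f x ^ (k + 1) = x ^ k - x ^ (k + 1)).

(* H_k(y_1,...,y_k), with y indexed from 1:
   sum_{i=1}^k (1-y_i) * prod_{j=i+1}^k y_j * prod_{j=1}^{i-1} f(y_j)
   - prod_{i=1}^k f(y_i) *)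
Definition Hk (k : nat) (f : R -> R) (y : nat -> R) : R :=
  sumR (fun i0 => let i := S i0 in
          (1 - y i) * prodR (fun j0 => y (i + 1 + j0)%nat) (k - i)
                    * prodR (fun j0 => f (y (S j0))) (i - 1)) k
  - prodR (fun j0 => f (y (S j0))) k.

(* Write W_n(a,b) = sum_{i<n} a^i b^(n-1-i) ([hsum]).  The identity f^k(1-f) = y^k(1-y)
   factors as (y - f)((1-y) W_k(y,f) - f^k) = 0, so (1-y) W_k(y, f y) = (f y)^k off the
   fixed point of f, and >= holds at the fixed point since it lies below k/(k+1).  Putting
   P_j = f(y_1)...f(y_j) and S_j for the first sum of H_j, one has
   S_(j+1) = y_(j+1) S_j + (1-y_(j+1)) P_j, and H_k = S_k - P_k.  By induction on j,
   S_j / P_j >= b^(k-j) W_j(a,b) / W_k(a,b) at a = y_j, b = f a: the recursion and the key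
   inequality advance j, and the right-hand side only decreases when a grows and b shrinks,
   which lets the point move from y_j to y_(j+1).  At j = k the bound reads S_k >= P_k. *)

From Stdlib Require Import Reals Lra Lia Psatz.
Open Scope R_scope.

Fixpoint hsum (n : nat) (a b : R) : R :=
  match n with
  | O => 0
  | S m => b * hsum m a b + a ^ m
  end.

Lemma hsum_nonneg n a b : 0 <= a -> 0 <= b -> 0 <= hsum n a b.
Proof.
  intros Ha Hb; induction n as [|n IH]; simpl; [lra|].
  pose proof (pow_le a n Ha); nra.
Qed.

Lemma hsum_succ_r n a b : hsum (S n) a b = a * hsum n a b + b ^ n.
Proof.
  induction n as [|n IH]; [simpl; ring|].
  change (hsum (S (S n)) a b) with (b * hsum (S n) a b + a ^ S n).
  rewrite IH at 1; simpl; ring.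
Qed.

Lemma hsum_mul_sub n a b : (a - b) * hsum n a b = a ^ n - b ^ n.
Proof.
  induction n as [|n IH]; simpl; [ring|].
  transitivity (b * ((a - b) * hsum n a b) + (a - b) * a ^ n); [ring|].
  rewrite IH; ring.
Qed.

Lemma hsum_add j n a b : hsum (j + n) a b = b ^ n * hsum j a b + a ^ j * hsum n a b.
Proof.
  induction n as [|n IH]; [rewrite Nat.add_0_r; simpl; ring|].
  rewrite Nat.add_succ_r.
  change (hsum (S (j + n)) a b) with (b * hsum (j + n) a b + a ^ (j + n)).
  rewrite IH, pow_add; simpl; ring.
Qed.

Lemma hsum_diag n a : a * hsum n a a = INR n * a ^ n.
Proof.
  induction n as [|n IH]; [simpl; ring|].
  rewrite S_INR; simpl.
  transitivity (a * (a * hsum n a a) + a * a ^ n); [ring|].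
  rewrite IH; ring.
Qed.

Lemma hsum_le m a b : 0 <= a <= b -> hsum (S m) a b <= INR (S m) * b ^ m.
Proof.
  intros [Ha Hab]; induction m as [|m IH]; [simpl; lra|].
  change (hsum (S (S m)) a b) with (b * hsum (S m) a b + a ^ S m).
  assert (a ^ S m <= b ^ S m) by (apply pow_incr; lra).
  assert (b * hsum (S m) a b <= b * (INR (S m) * b ^ m))
    by (apply Rmult_le_compat_l; lra).
  rewrite (S_INR (S m)); simpl pow in *; lra.
Qed.

Section HsumMonotone.

Variables a a' b b' : R.
Hypotheses (Ha : 0 <= a <= a') (Hb : 0 <= b' <= b).

Lemma hsum_pow_le_l n : a ^ n * hsum n a' b' <= a' ^ n * hsum n a b.
Proof.
  induction n as [|n IH]; [simpl; lra|].
  rewrite !hsum_succ_r.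
  assert (a * a' * (a ^ n * hsum n a' b') <= a * a' * (a' ^ n * hsum n a b))
    by (apply Rmult_le_compat_l; nra).
  assert (a ^ S n * b' ^ n <= a' ^ S n * b ^ n)
    by (apply Rmult_le_compat; try apply pow_le; try apply pow_incr; lra).
  simpl pow in *; lra.
Qed.

Lemma hsum_pow_le_r n : b' ^ n * hsum n a b <= b ^ n * hsum n a' b'.
Proof.
  induction n as [|n IH]; [simpl; lra|].
  simpl hsum.
  assert (b * b' * (b' ^ n * hsum n a b) <= b * b' * (b ^ n * hsum n a' b'))
    by (apply Rmult_le_compat_l; nra).
  assert (b' ^ S n * a ^ n <= b ^ S n * a' ^ n)
    by (apply Rmult_le_compat; try apply pow_le; try apply pow_incr; lra).
  simpl pow in *; lra.
Qed.

(* Cross-multiplied form of: b^(k-j) W_j(a,b) / W_k(a,b) does not increase under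
   (a,b) |-> (a',b'). *)
Lemma hsum_cross_le j k : (j <= k)%nat ->
  b' ^ (k - j) * hsum j a' b' * hsum k a b <= b ^ (k - j) * hsum j a b * hsum k a' b'.
Proof.
  intros Hjk.
  remember (k - j)%nat as n.
  replace k with (j + n)%nat by lia; rewrite !hsum_add.
  pose proof (hsum_pow_le_l j); pose proof (hsum_pow_le_r n).
  assert (0 <= a ^ j * hsum j a' b')
    by (apply Rmult_le_pos; [apply pow_le | apply hsum_nonneg]; lra).
  assert (0 <= b' ^ n * hsum n a b)
    by (apply Rmult_le_pos; [apply pow_le | apply hsum_nonneg]; lra).
  assert (a ^ j * hsum j a' b' * (b' ^ n * hsum n a b)
          <= a' ^ j * hsum j a b * (b ^ n * hsum n a' b'))
    by (apply Rmult_le_compat; lra).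
  lra.
Qed.

End HsumMonotone.

Lemma pow_diff_factor k u v :
  (u ^ k - u ^ (k + 1)) - (v ^ k - v ^ (k + 1)) = (u - v) * ((1 - u) * hsum k u v - v ^ k).
Proof.
  replace (k + 1)%nat with (S k) by lia.
  pose proof (hsum_mul_sub k u v); pose proof (hsum_mul_sub (S k) u v) as E.
  rewrite hsum_succ_r in E.
  transitivity ((u - v) * hsum k u v - (u - v) * (u * hsum k u v + v ^ k)); [lra | ring].
Qed.

Lemma pow_diff_decreasing k u v : (1 <= k)%nat -> 0 <= u < v -> v <= 1 ->
  INR k * (1 - u) < u -> v ^ k - v ^ (k + 1) < u ^ k - u ^ (k + 1).
Proof.
  intros Hk Hu Hv Hku; destruct k as [|m]; [lia|].
  pose proof (hsum_le m u v ltac:(lra)).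
  assert (0 < v ^ m) by (apply pow_lt; lra).
  assert ((1 - u) * hsum (S m) u v <= (1 - u) * (INR (S m) * v ^ m))
    by (apply Rmult_le_compat_l; lra).
  assert (0 < v ^ m * (v - INR (S m) * (1 - u))) by (apply Rmult_lt_0_compat; lra).
  assert (0 < (v - u) * (v ^ S m - (1 - u) * hsum (S m) u v)).
  { apply Rmult_lt_0_compat; simpl pow; lra. }
  pose proof (pow_diff_factor (S m) u v); lra.
Qed.

Section FkProperties.

Variables (k : nat) (f : R -> R).
Hypotheses (Hk : (1 <= k)%nat) (Hf : is_fk k f).

Lemma is_fk_antitone x x' : 0 <= x <= 1 -> 0 <= x' <= 1 -> x <= x' -> f x' <= f x.
Proof.
  destruct Hf as [_ [Hdec _]]; intros Hx Hx' Hxx'.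
  destruct (Req_dec x x') as [<-|]; [lra|].
  left; apply Hdec; lra.
Qed.

(* Beyond k/(k+1) the map t |-> t^k - t^(k+1) is injective, so a fixed point a there
   would force f x = x just below a, which f decreasing forbids. *)
Lemma is_fk_fixpoint_le a : 0 <= a <= 1 -> f a = a -> a <= INR k * (1 - a).
Proof.
  intros Ha Hfa; destruct Hf as [Hrange [Hdec Heq]].
  destruct (Rle_or_lt a (INR k * (1 - a))) as [|Hlt]; [assumption | exfalso].
  assert (HK : 1 <= INR k) by (apply (le_INR 1); lia).
  set (K := INR k) in *; set (c := K / (K + 1)).
  assert (Hc : c * (K + 1) = K) by (unfold c; field; lra).
  assert (0 <= c)
    by (unfold c; apply Rmult_le_pos; [lra | left; apply Rinv_0_lt_compat; lra]).
  assert (c < a) by nra.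
  set (x := (a + c) / 2).
  assert (c < x < a) by (unfold x; lra).
  assert (Hx : 0 <= x <= 1) by lra.
  assert (K * (1 - x) < x) by nra.
  assert (f a < f x) by (apply Hdec; lra).
  pose proof (Hrange x Hx).
  pose proof (pow_diff_decreasing k x (f x) Hk ltac:(lra) ltac:(lra) ltac:(assumption)).
  pose proof (Heq x Hx); lra.
Qed.

Lemma is_fk_key x : 0 <= x <= 1 -> f x ^ k <= (1 - x) * hsum k x (f x).
Proof.
  intros Hx; destruct Hf as [_ [_ Heq]].
  destruct (Req_dec x (f x)) as [E|E].
  - rewrite <- E.
    pose proof (is_fk_fixpoint_le x Hx (eq_sym E)).
    destruct (Req_dec x 0) as [->|].
    + rewrite pow_i by lia; pose proof (hsum_nonneg k 0 0 ltac:(lra) ltac:(lra)); lra.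
    + assert (0 <= x ^ k) by (apply pow_le; lra).
      assert (x * x ^ k <= INR k * (1 - x) * x ^ k) by (apply Rmult_le_compat_r; lra).
      apply (Rmult_le_reg_l x); [lra|].
      replace (x * ((1 - x) * hsum k x x)) with ((1 - x) * (x * hsum k x x)) by ring.
      rewrite hsum_diag; lra.
  - pose proof (pow_diff_factor k x (f x)) as D; rewrite (Heq x Hx), Rminus_diag in D.
    symmetry in D; apply Rmult_integral in D; destruct D; lra.
Qed.

Lemma is_fk_hsum_pos x : 0 <= x <= 1 -> 0 < hsum k x (f x).
Proof.
  intros Hx; destruct Hf as [Hrange [Hdec _]]; destruct k as [|m]; [lia|].
  pose proof (Hrange x Hx).
  destruct (Req_dec x 0) as [->|].
  - rewrite hsum_succ_r.
    assert (f 1 < f 0) by (apply Hdec; lra); pose proof (Hrange 1 ltac:(lra)).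
    assert (0 < f 0 ^ m) by (apply pow_lt; lra).
    pose proof (hsum_nonneg m 0 (f 0) ltac:(lra) ltac:(lra)); nra.
  - simpl hsum.
    assert (0 <= hsum m x (f x)) by (apply hsum_nonneg; lra).
    assert (0 < x ^ m) by (apply pow_lt; lra); nra.
Qed.

End FkProperties.

Lemma ratio_step k j a b p s : (j < k)%nat -> 0 <= a <= 1 -> 0 <= p ->
  b ^ k <= (1 - a) * hsum k a b ->
  p * b ^ (k - j) * hsum j a b <= s * hsum k a b ->
  p * b * b ^ (k - S j) * hsum (S j) a b <= (a * s + (1 - a) * p) * hsum k a b.
Proof.
  intros Hjk Ha Hp Hkey Hinv.
  rewrite hsum_succ_r.
  replace (k - j)%nat with (S (k - S j)) in Hinv by lia.
  assert (Ek : b ^ k = b ^ S (k - S j) * b ^ j) by (rewrite <- pow_add; f_equal; lia).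
  rewrite Ek in Hkey.
  assert (a * (p * b ^ S (k - S j) * hsum j a b) <= a * (s * hsum k a b))
    by (apply Rmult_le_compat_l; lra).
  assert (p * (b ^ S (k - S j) * b ^ j) <= p * ((1 - a) * hsum k a b))
    by (apply Rmult_le_compat_l; lra).
  simpl pow in *; lra.
Qed.

Lemma ratio_shift k j a b a' b' p s : (j <= k)%nat -> 0 <= a <= a' -> 0 <= b' <= b ->
  0 < hsum k a b -> 0 <= hsum k a' b' -> 0 <= p ->
  p * b ^ (k - j) * hsum j a b <= s * hsum k a b ->
  p * b' ^ (k - j) * hsum j a' b' <= s * hsum k a' b'.
Proof.
  intros Hjk Ha Hb Hpos Hnn Hp Hinv.
  pose proof (hsum_cross_le a a' b b' Ha Hb j k Hjk).
  assert (p * (b' ^ (k - j) * hsum j a' b' * hsum k a b)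
          <= p * (b ^ (k - j) * hsum j a b * hsum k a' b'))
    by (apply Rmult_le_compat_l; lra).
  assert (p * b ^ (k - j) * hsum j a b * hsum k a' b' <= s * hsum k a b * hsum k a' b')
    by (apply Rmult_le_compat_r; lra).
  apply (Rmult_le_reg_r (hsum k a b)); [lra | nra].
Qed.

Lemma sumR_ext g h n : (forall i, (i < n)%nat -> g i = h i) -> sumR g n = sumR h n.
Proof.
  induction n as [|n IH]; intros E; simpl; [reflexivity|].
  rewrite IH, E; [reflexivity | lia | intros; apply E; lia].
Qed.

Lemma sumR_scal c g n : sumR (fun i => c * g i) n = c * sumR g n.
Proof. induction n as [|n IH]; simpl; [ring | rewrite IH; ring]. Qed.

Definition Hk_prod (f : R -> R) (y : nat -> R) (j : nat) : R :=
  prodR (fun i => f (y (S i))) j.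

Definition Hk_sum (f : R -> R) (y : nat -> R) (j : nat) : R :=
  sumR (fun i => (1 - y (S i)) * prodR (fun l => y (S i + 1 + l)%nat) (j - S i)
                 * Hk_prod f y i) j.

Lemma Hk_sum_succ f y j :
  Hk_sum f y (S j) = y (S j) * Hk_sum f y j + (1 - y (S j)) * Hk_prod f y j.
Proof.
  unfold Hk_sum; cbn [sumR]; rewrite Nat.sub_diag; cbn [prodR].
  rewrite <- sumR_scal; f_equal; [|ring].
  apply sumR_ext; intros i Hi.
  replace (S j - S i)%nat with (S (j - S i)) by lia; cbn [prodR].
  replace (S i + 1 + (j - S i))%nat with (S j) by lia; ring.
Qed.

Lemma Hk_split k f y : Hk k f y = Hk_sum f y k - Hk_prod f y k.
Proof.
  unfold Hk, Hk_sum, Hk_prod; f_equal; apply sumR_ext; intros i Hi; cbv zeta.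
  replace (S i - 1)%nat with i by lia; reflexivity.
Qed.

Lemma chain_le (y : nat -> R) k : (forall i, (1 <= i < k)%nat -> y i <= y (S i)) ->
  forall i j, (1 <= i <= j)%nat -> (j <= k)%nat -> y i <= y j.
Proof.
  intros Hmon i j Hij Hjk; induction j as [|j IH]; [lia|].
  destruct (Nat.eq_dec i (S j)) as [->|]; [lra|].
  pose proof (Hmon j ltac:(lia)); pose proof (IH ltac:(lia) ltac:(lia)); lra.
Qed.

Section Telescoping.

Variables (k : nat) (f : R -> R) (y : nat -> R).
Hypotheses (Hk : (1 <= k)%nat) (Hf : is_fk k f)
  (Hy : forall i, (1 <= i <= k)%nat -> 0 <= y i <= 1)
  (Hmon : forall i, (1 <= i < k)%nat -> y i <= y (S i)).

Definition ratio_bound (j : nat) (a : R) : Prop :=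
  Hk_prod f y j * f a ^ (k - j) * hsum j a (f a) <= Hk_sum f y j * hsum k a (f a).

Lemma Hk_prod_nonneg j : (j <= k)%nat -> 0 <= Hk_prod f y j.
Proof.
  destruct Hf as [Hrange _].
  induction j as [|j IH]; intros Hj; unfold Hk_prod; simpl; [lra|].
  pose proof (Hrange _ (Hy (S j) ltac:(lia))); pose proof (IH ltac:(lia)).
  unfold Hk_prod in *; nra.
Qed.

Lemma ratio_bound_succ j :
  (j < k)%nat -> ratio_bound j (y (S j)) -> ratio_bound (S j) (y (S j)).
Proof.
  intros Hj Hb; unfold ratio_bound.
  rewrite Hk_sum_succ; unfold Hk_prod at 1; cbn [prodR]; fold (Hk_prod f y j).
  apply ratio_step; auto using Hk_prod_nonneg, is_fk_key with arith.
Qed.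

Lemma ratio_bound_shift j :
  (1 <= j < k)%nat -> ratio_bound j (y j) -> ratio_bound j (y (S j)).
Proof.
  intros Hj; unfold ratio_bound; apply ratio_shift.
  - lia.
  - pose proof (Hy j ltac:(lia)); pose proof (Hmon j Hj); lra.
  - pose proof Hf as [Hrange _]; pose proof (Hrange _ (Hy (S j) ltac:(lia))).
    split; [lra |].
    apply (is_fk_antitone k f Hf); [apply Hy; lia | apply Hy; lia | apply Hmon, Hj].
  - apply (is_fk_hsum_pos k f Hk Hf), Hy; lia.
  - left; apply (is_fk_hsum_pos k f Hk Hf), Hy; lia.
  - apply Hk_prod_nonneg; lia.
Qed.

Lemma ratio_bound_diag j : (1 <= j <= k)%nat -> ratio_bound j (y j).
Proof.
  induction j as [|j IH]; intros Hj; [lia|].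
  apply ratio_bound_succ; [lia|].
  destruct j as [|j].
  - unfold ratio_bound, Hk_sum; simpl; lra.
  - apply ratio_bound_shift; [lia | apply IH; lia].
Qed.

Lemma Hk_prod_le_sum : Hk_prod f y k <= Hk_sum f y k.
Proof.
  pose proof (ratio_bound_diag k ltac:(lia)) as B; unfold ratio_bound in B.
  rewrite Nat.sub_diag in B; simpl pow in B.
  apply (Rmult_le_reg_r (hsum k (y k) (f (y k)))); [|lra].
  apply (is_fk_hsum_pos k f Hk Hf), Hy; lia.
Qed.

End Telescoping.

Theorem mainTheorem5 (k : nat) (f : R -> R) (y : nat -> R) :
  (1 <= k)%nat ->
  is_fk k f ->
  0 <= y 1%nat ->
  (forall i, (1 <= i < k)%nat -> y i <= y (S i)) ->
  y k <= 1 ->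
  0 <= Hk k f y.
Proof.
  intros Hk Hf Hy1 Hmon Hyk.
  assert (Hy : forall i, (1 <= i <= k)%nat -> 0 <= y i <= 1).
  { intros i Hi; pose proof (chain_le y k Hmon 1 i ltac:(lia) ltac:(lia)).
    pose proof (chain_le y k Hmon i k ltac:(lia) ltac:(lia)); lra. }
  rewrite Hk_split; pose proof (Hk_prod_le_sum k f y Hk Hf Hy Hmon); lra.
Qed.
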